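(* Let $(L,\le,\bot,\top)$ be a complete lattice and $(\&_i,\swarrow^i,\nwarrow_i)$, $i=1,\dots,n$, adjoint triples on $L$ with $x\,\&_i\,\top=\top\,\&_i\,x=x$ for all $x\in L$ and all $i$. Let $(A,B,R,\sigma)$ be a normalized context whose concept lattice $\mathcal{M}$ satisfies the ascending chain condition and which has a decomposition into independent subcontexts $\{(A_\lambda,B_\lambda,R_\lambda,\sigma_\lambda)\mid\lambda\in\Lambda\}$. Then for every $\lambda\in\Lambda$ the set $$K_\lambda=\{\langle g,f\rangle\in\mathcal{M}\mid\langle g,f\rangle=\textstyle\bigwedge M_g^{A_\lambda}\}\cup\{\langle g_\top,f_\bot\rangle,\langle g_\bot,f_\top\rangle\}$$ is a complete block of $\mathcal{M}$.
   Context: An adjoint triple on $L$ is a triple of maps $\&,\swarrow,\nwarrow\colon L\times L\to L$ with $x\le z\swarrow y\iff x\& y\le z\iff y\le z\nwarrow x$. A context is $(A,B,R,\sigma)$ with $A,B$ non-empty, $R\colon A\times B\to L$, $\sigma\colon A\times B\to\{1,\dots,n\}$; normalized means every $a\in A$ has $b_1,b_2$ with $R(a,b_1)\ne\bot$, $R(a,b_2)=\bot$, and every $b\in B$ has $a_1,a_2$ with $R(a_1,b)\ne\bot$, $R(a_2,b)=\bot$. For $g\colon B\to L$, $f\colon A\to L$: $g^\uparrow(a)=\inf_{b}R(a,b)\swarrow^{\sigma(a,b)}g(b)$, $f^\downarrow(b)=\inf_{a}R(a,b)\nwarrow_{\sigma(a,b)}f(a)$. $\mathcal{M}$ is the complete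 lattice of pairs $\langle g,f\rangle$ with $g^\uparrow=f$, $f^\downarrow=g$, ordered by $g_1\le g_2$ pointwise; its top is $\langle g_\top,f_\bot\rangle$ and bottom $\langle g_\bot,f_\top\rangle$, where $g_\top,g_\bot,f_\top,f_\bot$ are constant maps with the indicated values. $\phi_{a,x}\colon A\to L$ takes value $x$ at $a$ and $\bot$ elsewhere. Meet-irreducible concepts (elements $c\ne$ top with $c=d\wedge e\Rightarrow c\in\{d,e\}$) all have the form $\langle\phi_{a,x}^\downarrow,\phi_{a,x}^{\downarrow\uparrow}\rangle$. For $A'\subseteq A$, $M_F^{A'}$ is the set of meet-irreducible concepts equal to $\langle\phi_{a,x}^\downarrow,\phi_{a,x}^{\downarrow\uparrow}\rangle$ for some $a\in A'$, $x\in L$, and $M_g^{A'}=\{c\in M_F^{A'}\mid\langle g,f\rangle\preceq c\}$. Separable subcontext: $(Y,X,R_{Y\times X},\sigma_{Y\times X})$ with $Y\subsetneq A$, $X\subsetneq B$ non-empty, some $R(a,b)\ne\bot$ with $a\in Y,b\in X$, $R=\bot$ on $Y\times(B\setminus X)$ and on $(A\setminus Y)\times X$. $\&$ has zero-divisors if $x\&y=\bot$ for some $x,y\neq\bot$. Decomposition into independent subcontexts: non-empty $\Lambda$, each $(A_\lambda,B_\lambda,R_\lambda,\sigma_\lambda)$ (restrictions) separable, $\{A_\lambda\}$ partitions $A$, $\{B_\lambda\}$ partitions $B$, and $\&_{\sigma(a,b)}$ has no zero-divisors whenever $(a,b)\in((A\setminus A_\lambda)\times B_\lambda)\cup(A_\lambda\times(B\setminus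 B_\lambda))$ for some $\lambda$. For a bounded lattice $(M,\preceq,\bot,\top)$, a block is a sublattice $K\subsetneq M$ with $K\setminus\{\bot,\top\}\ne\varnothing$ and $(\{x\mid k\preceq x\}\cup\{x\mid x\preceq k\})\setminus\{\bot,\top\}\subseteq K$ for all $k\in K\setminus\{\bot,\top\}$; it is complete if $\bot,\top\in K$. *)

From HB Require Import structures.
From mathcomp Require Import all_boot all_order.
Set Implicit Arguments. Unset Strict Implicit. Unset Printing Implicit Defensive.
Import Order.Theory.
Local Open Scope order_scope.

Section Lat.
Context {d : Order.disp_t} {L : tbLatticeType d}.

Definition is_inf (S : L -> Prop) (x : L) : Prop :=
  (forall y, S y -> x <= y) /\ (forall z, (forall y, S y -> z <= y) -> z <= x).

Definition complete_lattice : Prop := forall S : L -> Prop, exists x, is_inf S x.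

(* (conj, sw, nw) = (&, ↙, ↖):  x <= z ↙ y <-> x & y <= z <-> y <= z ↖ x *)
Definition adjoint_triple (conj sw nw : L -> L -> L) : Prop :=
  forall x y z, (x <= sw z y <-> conj x y <= z) /\ (conj x y <= z <-> y <= nw z x).

Definition has_zero_divisors (conj : L -> L -> L) : Prop :=
  exists x y, x != \bot /\ y != \bot /\ conj x y = \bot.

Variables (n : nat) (A B : eqType) (R : A -> B -> L) (sigma : A -> B -> 'I_n).

Definition normalized_context : Prop :=
  (forall a, (exists b, R a b != \bot) /\ (exists b, R a b = \bot)) /\
  (forall b, (exists a, R a b != \bot) /\ (exists a, R a b = \bot)).

Variables (sw nw : 'I_n -> L -> L -> L).

Definition derive_up (g : B -> L) (f : A -> L) : Prop :=
  forall a, is_inf (fun z => exists b, z = sw (sigma a b) (R a b) (g b)) (f a).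

Definition derive_down (f : A -> L) (g : B -> L) : Prop :=
  forall b, is_inf (fun z => exists a, z = nw (sigma a b) (R a b) (f a)) (g b).

Definition concept_t := ((B -> L) * (A -> L))%type.

Definition is_concept (c : concept_t) : Prop :=
  derive_up c.1 c.2 /\ derive_down c.2 c.1.

Definition cle (c1 c2 : concept_t) : Prop := forall b, c1.1 b <= c2.1 b.

Definition top_concept : concept_t := (fun _ => \top, fun _ => \bot).
Definition bot_concept : concept_t := (fun _ => \bot, fun _ => \top).

Definition phi (a : A) (x : L) : A -> L := fun a' => if a' == a then x else \bot.

End Lat.

Section Poset.
Variables (T : Type) (P : T -> Prop) (le : T -> T -> Prop).

Definition is_glb_in (S : T -> Prop) (x : T) : Prop :=
  P x /\ (forall y, S y -> le x y) /\
  (forall z, P z -> (forall y, S y -> le z y) -> le z x).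

Definition is_lub_in (S : T -> Prop) (x : T) : Prop :=
  P x /\ (forall y, S y -> le y x) /\
  (forall z, P z -> (forall y, S y -> le y z) -> le x z).

Definition pair_set (x y : T) : T -> Prop := fun z => z = x \/ z = y.

Definition ACC : Prop :=
  forall c : nat -> T, (forall k, P (c k)) -> (forall k, le (c k) (c k.+1)) ->
  exists N, forall m, (N <= m)%N -> c m = c N.

Definition meet_irreducible (top : T) (c : T) : Prop :=
  P c /\ c <> top /\
  forall x y, P x -> P y -> is_glb_in (pair_set x y) c -> c = x \/ c = y.

Definition sublattice (K : T -> Prop) : Prop :=
  (forall k, K k -> P k) /\
  (forall k1 k2 m, K k1 -> K k2 -> is_glb_in (pair_set k1 k2) m -> K m) /\
  (forall k1 k2 m, K k1 -> K k2 -> is_lub_in (pair_set k1 k2) m -> K m).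

Definition block (bot top : T) (K : T -> Prop) : Prop :=
  sublattice K /\ (exists c, P c /\ ~ K c) /\
  (exists k, K k /\ k <> bot /\ k <> top) /\
  (forall k, K k -> k <> bot -> k <> top ->
     forall x, P x -> (le k x \/ le x k) -> x <> bot -> x <> top -> K x).

Definition complete_block (bot top : T) (K : T -> Prop) : Prop :=
  block bot top K /\ K bot /\ K top.
End Poset.

Section Ctx.
Context {d : Order.disp_t} {L : tbLatticeType d}.
Variables (n : nat) (A B : eqType) (R : A -> B -> L) (sigma : A -> B -> 'I_n).
Variables (conj sw nw : 'I_n -> L -> L -> L).

Definition separable_subcontext (Y : A -> Prop) (X : B -> Prop) : Prop :=
  (exists a, Y a) /\ (exists a, ~ Y a) /\ (exists b, X b) /\ (exists b, ~ X b) /\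
  (exists a b, Y a /\ X b /\ R a b != \bot) /\
  (forall a b, Y a -> ~ X b -> R a b = \bot) /\
  (forall a b, ~ Y a -> X b -> R a b = \bot).

Definition independent_decomposition (Lam : Type)
    (AL : Lam -> A -> Prop) (BL : Lam -> B -> Prop) : Prop :=
  inhabited Lam /\
  (forall l, separable_subcontext (AL l) (BL l)) /\
  (forall a, exists! l, AL l a) /\
  (forall b, exists! l, BL l b) /\
  (forall l a b, ((~ AL l a /\ BL l b) \/ (AL l a /\ ~ BL l b)) ->
      ~ has_zero_divisors (conj (sigma a b))).

Let M := is_concept R sigma sw nw.

Definition MF (A' : A -> Prop) (c : @concept_t d L A B) : Prop :=
  meet_irreducible M (@cle d L A B) (@top_concept d L A B) c /\
  exists a x, A' a /\ derive_down R sigma nw (phi a x) c.1 /\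
  derive_up R sigma sw c.1 c.2.

Definition Mg (A' : A -> Prop) (c : @concept_t d L A B) : @concept_t d L A B -> Prop :=
  fun e => MF A' e /\ cle c e.

Definition Kset (A' : A -> Prop) : @concept_t d L A B -> Prop :=
  fun c => (M c /\ is_glb_in M (@cle d L A B) (Mg A' c) c)
           \/ c = @top_concept d L A B \/ c = @bot_concept d L A B.
End Ctx.

From HB Require Import structures.
From mathcomp Require Import all_boot all_order.
From Stdlib Require Import Classical ClassicalEpsilon FunctionalExtensionality.
Import Order.Theory.
Local Open Scope order_scope.
Set Implicit Arguments. Unset Strict Implicit.

(* Every concept other than top and bottom is supported by a single subcontext:
   if [g b <> bot] with [b] in [B_l], then [f a = bot] for every [a] outside
   [A_l], since [R a b = bot] and, without zero divisors, [nw i bot x = bot] for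
   [x <> bot] (and dually).  Comparable non-trivial concepts share a non-zero
   coordinate, hence the same subcontext; so the classes [C_l] of non-trivial
   concepts supported by [l] are convex and closed under the binary meets and
   joins that are not top or bottom.  It remains to see that [K_l] is [C_l]
   plus top and bottom.  Under the ascending chain condition, a concept [c] not
   above a lower bound [z] of [M_g^{A_l}] lies below a concept [m] maximal
   among those not above [z]; such an [m] is meet-irreducible and generated by
   a single [phi a x], with [a] in [A_l] when [c] is in [C_l], so [z <= m], a
   contradiction.  Conversely, every member of [M_g^{A_l}] lies above [c],
   hence in the class of [c]; if that class is not [C_l], then [M_g^{A_l}] is
   empty and its meet is top. *)

Section MaximalAvoiding.
Variables (T : Type) (P : T -> Prop) (le : T -> T -> Prop).

Lemma ACC_maximal (S : T -> Prop) s0 : ACC P le -> (forall x, S x -> P x) -> S s0 ->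
  exists2 m, S m & forall y, S y -> le m y -> y = m.
Proof.
move=> acc SP Ss0; apply: NNPP => no_max.
have up x : S x -> exists y, S y /\ le x y /\ y <> x.
  move=> Sx; apply: NNPP => no_up; apply: no_max; exists x => // y Sy xy.
  by apply: NNPP => yx; apply: no_up; exists y.
have step (x : {x | S x}) : {y : {x | S x} | le (sval x) (sval y) /\ sval y <> sval x}.
  have [y [Sy xy]] := constructive_indefinite_description _ (up _ (svalP x)).
  by exists (exist _ y Sy).
pose c k := iter k (fun x => sval (step x)) (exist _ s0 Ss0 : {x | S x}).
have [N cN] := acc (fun k => sval (c k)) (fun k => SP _ (svalP (c k)))
  (fun k => (svalP (step (c k))).1).
exact: (svalP (step (c N))).2 (cN N.+1 (leqnSn N)).
Qed.

Hypothesis le_refl : forall x, le x x.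
Hypothesis le_trans : forall x y z, le x y -> le y z -> le x z.

Lemma ACC_maximal_avoiding z c : ACC P le -> P c -> ~ le z c ->
  exists m, [/\ P m, le c m, ~ le z m & forall y, P y -> le m y -> y <> m -> le z y].
Proof.
move=> acc Pc zc.
have [m [Pm cm zm] m_max] := ACC_maximal (S := fun m => [/\ P m, le c m & ~ le z m])
  acc (fun x => fun '(And3 Px _ _) => Px) (And3 Pc (le_refl c) zc).
exists m; split=> // y Py my ym; apply: NNPP => zy; apply: ym; apply: m_max => //.
by split=> //; apply: le_trans my.
Qed.

Lemma maximal_avoiding_meet_irreducible top z m : P z -> le z top -> P m -> ~ le z m ->
  (forall y, P y -> le m y -> y <> m -> le z y) -> meet_irreducible P le top m.
Proof.
move=> Pz ztop Pm zm m_max; split=> //; split=> [mtop|x y Px Py [_ [lb glb]]].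
  by apply: zm; rewrite mtop.
apply: NNPP => /not_or_and [mx my]; apply: zm; apply: glb => // w [->|->].
  by apply: m_max => //; [apply: lb; left | move=> /esym].
by apply: m_max => //; [apply: lb; right | move=> /esym].
Qed.

End MaximalAvoiding.

Section Infimum.
Context {d : Order.disp_t} {L : tbLatticeType d}.

Lemma is_inf_lb (S : L -> Prop) x y : is_inf S x -> S y -> x <= y.
Proof. by move=> [lb _]; apply: lb. Qed.

Lemma is_inf_glb (S : L -> Prop) x z : is_inf S x -> (forall y, S y -> z <= y) -> z <= x.
Proof. by move=> [_ glb]; apply: glb. Qed.

Lemma is_inf_unique (S : L -> Prop) x y : is_inf S x -> is_inf S y -> x = y.
Proof.
move=> Sx Sy; apply/le_anti/andP; split.
  by apply: is_inf_glb Sy _ => z; apply: is_inf_lb Sx.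
by apply: is_inf_glb Sx _ => z; apply: is_inf_lb Sy.
Qed.

Lemma le_neq_bot (x y : L) : x <= y -> x != \bot -> y != \bot.
Proof. by move=> xy; apply: contra => /eqP y0; rewrite -lex0 -y0. Qed.

End Infimum.

Section AdjointTriple.
Context {d : Order.disp_t} {L : tbLatticeType d}.
Variables conj sw nw : L -> L -> L.
Hypothesis adj : adjoint_triple conj sw nw.

Lemma le_sw_nw x y z : x <= sw z y <-> y <= nw z x.
Proof. by have := adj x y z; tauto. Qed.

Lemma sw_botr z : sw z \bot = \top.
Proof. by apply/eqP; rewrite -le1x; apply/le_sw_nw. Qed.

Lemma nw_botr z : nw z \bot = \top.
Proof. by apply/eqP; rewrite -le1x; apply/le_sw_nw. Qed.

Hypothesis nzd : ~ has_zero_divisors conj.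

Lemma sw_botl y : y != \bot -> sw \bot y = \bot.
Proof.
move=> y0; have [//|x0] := eqVneq (sw \bot y) \bot.
case: nzd; exists (sw \bot y), y; split=> //; split=> //.
by apply/eqP; rewrite -lex0; apply/(adj _ _ _).1.
Qed.

Lemma nw_botl x : x != \bot -> nw \bot x = \bot.
Proof.
move=> x0; have [//|y0] := eqVneq (nw \bot x) \bot.
case: nzd; exists x, (nw \bot x); split=> //; split=> //.
by apply/eqP; rewrite -lex0; apply/(adj _ _ _).2.
Qed.

End AdjointTriple.

Section UnitalAdjointTriple.
Context {d : Order.disp_t} {L : tbLatticeType d}.
Variables conj sw nw : L -> L -> L.
Hypothesis adj : adjoint_triple conj sw nw.
Hypothesis conj_top : forall x, conj x \top = x /\ conj \top x = x.

Lemma sw_topr z : sw z \top = z.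
Proof.
apply/le_anti/andP; split; last by apply/(adj _ _ _).1; rewrite (conj_top z).1.
by have := (adj _ \top z).1.1 (lexx (sw z \top)); rewrite (conj_top _).1.
Qed.

Lemma nw_topr z : nw z \top = z.
Proof.
apply/le_anti/andP; split; last by apply/(adj \top _ _).2; rewrite (conj_top z).2.
by have := (adj \top _ z).2.2 (lexx (nw z \top)); rewrite (conj_top _).2.
Qed.

End UnitalAdjointTriple.

Section ConceptLattice.
Context {d : Order.disp_t} {L : tbLatticeType d}.
Variables (n : nat) (conj sw nw : 'I_n -> L -> L -> L).
Hypothesis adj : forall i, adjoint_triple (conj i) (sw i) (nw i).
Hypothesis conj_top : forall i x, conj i x \top = x /\ conj i \top x = x.
Hypothesis L_complete : complete_lattice (L := L).
Variables (A B : eqType) (R : A -> B -> L) (sigma : A -> B -> 'I_n).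
Hypothesis R_normalized : normalized_context R.

Notation M := (is_concept R sigma sw nw).
Notation top := (@top_concept d L A B).
Notation bot := (@bot_concept d L A B).
Notation cle := (@cle d L A B).

Let sw_bot i z : sw i z \bot = \top := sw_botr (adj i) z.
Let nw_bot i z : nw i z \bot = \top := nw_botr (adj i) z.
Let sw_top i z : sw i z \top = z := sw_topr (adj i) (conj_top i) z.
Let nw_top i z : nw i z \top = z := nw_topr (adj i) (conj_top i) z.
Let sw_nw_adj i x y z : x <= sw i z y <-> y <= nw i z x := le_sw_nw (adj i) x y z.

Lemma cle_refl c : cle c c.
Proof. by move=> b; apply: lexx. Qed.

Lemma cle_trans c1 c2 c3 : cle c1 c2 -> cle c2 c3 -> cle c1 c3.
Proof. by move=> le12 le23 b; apply: le_trans (le12 b) (le23 b). Qed.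

Lemma cle_top c : cle c top.
Proof. by move=> b; apply: lex1. Qed.

Lemma concept_le_anti c1 c2 : M c1 -> M c2 -> cle c1 c2 -> cle c2 c1 -> c1 = c2.
Proof.
case: c1 c2 => [g1 f1] [g2 f2] [up1 _] [up2 _] /= le12 le21.
have g12 : g1 = g2.
  by apply: functional_extensionality => b; apply/le_anti; rewrite le12 le21.
subst g2; congr (_, _).
by apply: functional_extensionality => a; apply: is_inf_unique (up1 a) (up2 a).
Qed.

Lemma is_concept_top : M top.
Proof.
split=> [a|b]; split=> /=.
- by move=> _ [b ->]; apply: le0x.
- have [b Rab] := (R_normalized.1 a).2.
  by move=> z lbz; have := lbz _ (ex_intro _ b erefl); rewrite sw_top Rab.
- by move=> _ [a ->]; rewrite nw_bot.
- by move=> z _; apply: lex1.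
Qed.

Lemma is_concept_bot : M bot.
Proof.
split=> [a|b]; split=> /=.
- by move=> _ [b ->]; rewrite sw_bot.
- by move=> z _; apply: lex1.
- by move=> _ [a ->]; apply: le0x.
- have [a Rab] := (R_normalized.2 b).2.
  by move=> z lbz; have := lbz _ (ex_intro _ a erefl); rewrite nw_top Rab.
Qed.

Lemma concept_ge_top c : M c -> cle top c -> c = top.
Proof.
by move=> Mc topc; apply: concept_le_anti => //; [apply: is_concept_top | apply: cle_top].
Qed.

Lemma concept_le_bot c : M c -> cle c bot -> c = bot.
Proof.
by move=> Mc cbot; apply: concept_le_anti => // [|b]; [apply: is_concept_bot | apply: le0x].
Qed.

Lemma concept_of_down f0 : exists c, M c /\ derive_down R sigma nw f0 c.1.
Proof.
have [g down_g] : exists g, derive_down R sigma nw f0 g.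
  by apply: (choice (fun b => is_inf _)) => b; apply: L_complete.
have [f up_f] : exists f, derive_up R sigma sw g f.
  by apply: (choice (fun a => is_inf _)) => a; apply: L_complete.
have f0_le_f a : f0 a <= f a.
  apply: is_inf_glb (up_f a) _ => _ [b ->]; apply/sw_nw_adj.
  exact: is_inf_lb (down_g b) (ex_intro _ a erefl).
exists (g, f); split=> //; split=> // b; split=> [_ [a ->]|z lbz] /=.
  by apply/sw_nw_adj; apply: is_inf_lb (up_f a) (ex_intro _ b erefl).
apply: is_inf_glb (down_g b) _ => _ [a ->]; apply/sw_nw_adj.
by apply: le_trans (f0_le_f a) _; apply/sw_nw_adj; apply: lbz; exists a.
Qed.

Lemma phi_down_eq a x g : derive_down R sigma nw (phi a x) g ->
  forall b, g b = nw (sigma a b) (R a b) x.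
Proof.
move=> down_g b; apply: is_inf_unique (down_g b) _; split=> [_ [a' ->]|z lbz].
  by rewrite /phi; case: eqP => [->|_]; rewrite ?nw_bot ?lex1.
by have := lbz _ (ex_intro _ a erefl); rewrite /phi eqxx.
Qed.

Lemma phi_le_up a x g f : derive_down R sigma nw (phi a x) g ->
  derive_up R sigma sw g f -> x <= f a.
Proof.
move=> down_g up_f; apply: is_inf_glb (up_f a) _ => _ [b ->].
by apply/sw_nw_adj; rewrite (phi_down_eq down_g).
Qed.

Lemma concept_neq_top_witness c : M c -> c <> top -> exists a, c.2 a != \bot.
Proof.
move=> Mc ctop; apply: NNPP => all0; apply: ctop; apply: concept_ge_top => // b.
apply: is_inf_glb (Mc.2 b) _ => _ [a ->]; have [c0|ca] := eqVneq (c.2 a) \bot.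
  by rewrite c0 nw_bot.
by exfalso; apply: all0; exists a.
Qed.

Lemma concept_neq_bot_witness c : M c -> c <> bot -> exists b, c.1 b != \bot.
Proof.
move=> Mc cbot; apply: NNPP => all0; apply: cbot; apply: concept_le_bot => // b /=.
have [->//|cb] := eqVneq (c.1 b) \bot.
by exfalso; apply: all0; exists b.
Qed.

Lemma phi_concept_support a x c : M c -> derive_down R sigma nw (phi a x) c.1 ->
  c <> top -> c.2 a != \bot.
Proof.
move=> Mc down_c ctop; apply/negP => /eqP c0; apply: ctop; apply: concept_ge_top => // b.
have := phi_le_up down_c Mc.1; rewrite c0 lex0 => /eqP x0.
by rewrite /= (phi_down_eq down_c) x0 nw_bot.
Qed.

(* A concept maximal among those not above [z] is its own [phi]-closure at some
   object: otherwise every such closure lies strictly above it, hence above [z],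
   and so does their meet. *)
Lemma maximal_avoiding_phi z m : M m -> ~ cle z m ->
  (forall y, M y -> cle m y -> y <> m -> cle z y) ->
  exists a, derive_down R sigma nw (phi a (m.2 a)) m.1.
Proof.
move=> Mm zm m_max; apply: NNPP => not_phi; apply: zm => b.
apply: is_inf_glb (Mm.2 b) _ => _ [a ->].
have [c [Mc down_c]] := concept_of_down (phi a (m.2 a)).
have mc : cle m c.
  by move=> b'; rewrite (phi_down_eq down_c); apply: is_inf_lb (Mm.2 b') (ex_intro _ a erefl).
have cm : c <> m by move=> cm; apply: not_phi; exists a; move: down_c; rewrite cm.
by rewrite -(phi_down_eq down_c); apply: m_max.
Qed.

Lemma phi_top_concept a : exists c, [/\ M c, c <> top, c <> bot & c.2 a != \bot].
Proof.
have [c [Mc down_c]] := concept_of_down (phi a \top).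
have [b Rab] := (R_normalized.1 a).1.
have c2a : c.2 a != \bot by apply: le_neq_bot (phi_le_up down_c Mc.1) (le_neq_bot (lex1 _) Rab).
exists c; split=> // [ctop|cbot]; first by move: c2a; rewrite ctop eqxx.
have := phi_down_eq down_c b; rewrite nw_top cbot => /= R0.
by move: Rab; rewrite -R0 eqxx.
Qed.

Variables (Lam : Type) (AL : Lam -> A -> Prop) (BL : Lam -> B -> Prop).
Hypothesis decomp : independent_decomposition R sigma conj AL BL.

Definition nontrivial_concept c := [/\ M c, c <> top & c <> bot].

Definition supported l (c : @concept_t d L A B) :=
  (forall b, c.1 b != \bot -> BL l b) /\ (forall a, c.2 a != \bot -> AL l a).

Lemma AL_unique l1 l2 a : AL l1 a -> AL l2 a -> l1 = l2.
Proof.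
have [_ [_ [AL_part _]]] := decomp; have [l [_ l_uniq]] := AL_part a.
by move=> /l_uniq <- /l_uniq <-.
Qed.

Lemma BL_unique l1 l2 b : BL l1 b -> BL l2 b -> l1 = l2.
Proof.
have [_ [_ [_ [BL_part _]]]] := decomp; have [l [_ l_uniq]] := BL_part b.
by move=> /l_uniq <- /l_uniq <-.
Qed.

Lemma cross_nw_bot l a b x : ~ AL l a -> BL l b -> x != \bot ->
  nw (sigma a b) (R a b) x = \bot.
Proof.
have [_ [separable [_ [_ no_zd]]]] := decomp; have [_ [_ [_ [_ [_ [_ R0]]]]]] := separable l.
move=> la lb x0; rewrite (R0 _ _ la lb) (nw_botl (adj _)) //.
by apply: (no_zd l a b); left.
Qed.

Lemma cross_sw_bot l a b y : AL l a -> ~ BL l b -> y != \bot ->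
  sw (sigma a b) (R a b) y = \bot.
Proof.
have [_ [separable [_ [_ no_zd]]]] := decomp; have [_ [_ [_ [_ [_ [R0 _]]]]]] := separable l.
move=> la lb x0; rewrite (R0 _ _ la lb) (sw_botl (adj _)) //.
by apply: (no_zd l a b); right.
Qed.

Lemma concept_cross_snd c l a b : M c -> ~ AL l a -> BL l b -> c.1 b != \bot -> c.2 a = \bot.
Proof.
move=> [_ down_c] la lb; apply: contra_neq_eq => ca; apply/eqP; rewrite -lex0.
by rewrite -(cross_nw_bot la lb ca); apply: is_inf_lb (down_c b) (ex_intro _ a erefl).
Qed.

Lemma concept_cross_fst c l a b : M c -> AL l a -> ~ BL l b -> c.2 a != \bot -> c.1 b = \bot.
Proof.
move=> [up_c _] la lb; apply: contra_neq_eq => cb; apply/eqP; rewrite -lex0.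
by rewrite -(cross_sw_bot la lb cb); apply: is_inf_lb (up_c a) (ex_intro _ b erefl).
Qed.

Lemma nontrivial_supported c : nontrivial_concept c -> exists l, supported l c.
Proof.
move=> [Mc ctop cbot]; have [a ca] := concept_neq_top_witness Mc ctop.
have [b cb] := concept_neq_bot_witness Mc cbot.
have [_ [_ [AL_part _]]] := decomp; have [l [la _]] := AL_part a.
have cB b' : c.1 b' != \bot -> BL l b'.
  by move=> cb'; apply: NNPP => lb'; move: cb'; rewrite (concept_cross_fst Mc la lb' ca) eqxx.
exists l; split=> // a' ca'; apply: NNPP => la'.
by move: ca'; rewrite (concept_cross_snd Mc la' (cB b cb) cb) eqxx.
Qed.

Lemma supported_le l mu c c' : M c -> c <> bot -> supported l c -> supported mu c' ->
  cle c c' -> l = mu.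
Proof.
move=> Mc cbot [cB _] [c'B _] cc'; have [b cb] := concept_neq_bot_witness Mc cbot.
exact: BL_unique (cB b cb) (c'B b (le_neq_bot (cc' b) cb)).
Qed.

Lemma supported_comparable l c c' : nontrivial_concept c -> nontrivial_concept c' ->
  cle c c' \/ cle c' c -> supported l c -> supported l c'.
Proof.
move=> [Mc _ cbot] [Mc' c'top c'bot] cc' c_l.
have [mu c'_mu] := nontrivial_supported (And3 Mc' c'top c'bot).
case: cc' => [cc'|c'c]; first by rewrite (supported_le Mc cbot c_l c'_mu cc').
by rewrite -(supported_le Mc' c'bot c'_mu c_l c'c).
Qed.

Notation K l := (Kset R sigma sw nw (AL l)).

Hypothesis acc : ACC M cle.

Lemma Kset_supported l c : nontrivial_concept c -> supported l c -> K l c.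
Proof.
move=> c_nt c_l; have [Mc _ cbot] := c_nt.
left; split=> //; split=> //; split=> [e [] //|z Mz lbz]; apply: NNPP => zc.
have [m [Mm cm zm m_max]] := ACC_maximal_avoiding cle_refl cle_trans acc Mc zc.
apply: (zm); apply: lbz; split=> //.
have m_irr := maximal_avoiding_meet_irreducible Mz (cle_top z) Mm zm m_max.
have [a down_m] := maximal_avoiding_phi Mm zm m_max.
have mtop : m <> top := m_irr.2.1.
have mbot : m <> bot by move=> mb; apply: cbot; apply: concept_le_bot => //; rewrite -mb.
have [_ mA] := supported_comparable c_nt (And3 Mm mtop mbot) (or_introl cm) c_l.
split=> //; exists a, (m.2 a); split; last by split=> //; apply: Mm.1.
exact/mA/(phi_concept_support Mm down_m mtop).
Qed.

Lemma supported_Kset l c : nontrivial_concept c -> K l c -> supported l c.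
Proof.
move=> c_nt; have [Mc ctop cbot] := c_nt; case=> [[_ [_ [_ glb]]]|[//|//]].
have [mu c_mu] := nontrivial_supported c_nt.
suff -> : l = mu by [].
apply: NNPP => l_mu; apply: ctop; apply: concept_ge_top => //.
apply: glb is_concept_top _ => e [[[Me [etop _]] [a [x [la [down_e _]]]]] ce].
have ebot : e <> bot by move=> eb; apply: cbot; apply: concept_le_bot => //; rewrite -eb.
have [_ eA] := supported_comparable c_nt (And3 Me etop ebot) (or_introl ce) c_mu.
by case: l_mu; apply: AL_unique la (eA a (phi_concept_support Me down_e etop)).
Qed.

Lemma Kset_is_concept l c : K l c -> M c.
Proof. by case=> [[]|[->|->]] //; [apply: is_concept_top | apply: is_concept_bot]. Qed.

Lemma Kset_comparable l k x : K l k -> nontrivial_concept k -> M x ->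
  cle k x \/ cle x k -> K l x.
Proof.
move=> Kk k_nt Mx kx.
have [->|xtop] := classic (x = top); first by right; left.
have [->|xbot] := classic (x = bot); first by right; right.
apply: Kset_supported (And3 Mx xtop xbot) _.
exact: supported_comparable k_nt _ kx (supported_Kset k_nt Kk).
Qed.

Lemma Kset_meet_closed l k1 k2 m : K l k1 -> K l k2 ->
  is_glb_in M cle (pair_set k1 k2) m -> K l m.
Proof.
move=> K1 K2 [Mm [lb glb]].
have [->|mtop] := classic (m = top); first by right; left.
have [->|mbot] := classic (m = bot); first by right; right.
have [k [Kk mk ktop]] : exists k, [/\ K l k, cle m k & k <> top].
  have [k1top|] := classic (k1 = top); last by exists k1; split=> //; apply: lb; left.
  have [k2top|] := classic (k2 = top); last by exists k2; split=> //; apply: lb; right.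
  case: mtop; apply: concept_ge_top => //; apply: glb is_concept_top _ => _ [->|->].
    by rewrite k1top; apply: cle_refl.
  by rewrite k2top; apply: cle_refl.
have kbot : k <> bot by move=> kb; apply: mbot; apply: concept_le_bot => //; rewrite -kb.
exact: Kset_comparable Kk (And3 (Kset_is_concept Kk) ktop kbot) Mm (or_intror mk).
Qed.

Lemma Kset_join_closed l k1 k2 m : K l k1 -> K l k2 ->
  is_lub_in M cle (pair_set k1 k2) m -> K l m.
Proof.
move=> K1 K2 [Mm [ub lub]].
have [->|mtop] := classic (m = top); first by right; left.
have [->|mbot] := classic (m = bot); first by right; right.
have [k [Kk km kbot]] : exists k, [/\ K l k, cle k m & k <> bot].
  have [k1bot|] := classic (k1 = bot); last by exists k1; split=> //; apply: ub; left.
  have [k2bot|] := classic (k2 = bot); last by exists k2; split=> //; apply: ub; right.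
  case: mbot; apply: concept_le_bot => //; apply: lub is_concept_bot _ => _ [->|->].
    by rewrite k1bot; apply: cle_refl.
  by rewrite k2bot; apply: cle_refl.
have ktop : k <> top by move=> kt; apply: mtop; apply: concept_ge_top => //; rewrite -kt.
exact: Kset_comparable Kk (And3 (Kset_is_concept Kk) ktop kbot) Mm (or_introl km).
Qed.

Lemma Kset_complete_block l : complete_block M cle bot top (K l).
Proof.
have [_ [separable _]] := decomp; have [[a_in la] [[a_out nla] _]] := separable l.
split; last by split; [right; right | right; left].
split.
  by split; [apply: Kset_is_concept | split; [apply: Kset_meet_closed | apply: Kset_join_closed]].
split.
  have [c [Mc ctop cbot ca]] := phi_top_concept a_out.
  by exists c; split=> // /(supported_Kset (And3 Mc ctop cbot)) [_ /(_ a_out ca)].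
split.
  have [c [Mc ctop cbot ca]] := phi_top_concept a_in.
  have [mu c_mu] := nontrivial_supported (And3 Mc ctop cbot).
  exists c; split=> //; apply: Kset_supported (And3 Mc ctop cbot) _.
  by rewrite (AL_unique la (c_mu.2 a_in ca)).
move=> k Kk kbot ktop x Mx kx _ _.
exact: Kset_comparable Kk (And3 (Kset_is_concept Kk) ktop kbot) Mx kx.
Qed.

End ConceptLattice.

Theorem proposition31 (d : Order.disp_t) (L : tbLatticeType d)
  (HL : complete_lattice (L := L)) (n : nat)
  (conj sw nw : 'I_n -> L -> L -> L)
  (Hadj : forall i, adjoint_triple (conj i) (sw i) (nw i))
  (Hunit : forall i (x : L), conj i x \top = x /\ conj i \top x = x)
  (A B : eqType) (HA : inhabited A) (HB : inhabited B)
  (R : A -> B -> L) (sigma : A -> B -> 'I_n)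
  (Hnorm : normalized_context R)
  (Hacc : ACC (is_concept R sigma sw nw) (@cle d L A B))
  (Lam : Type) (AL : Lam -> A -> Prop) (BL : Lam -> B -> Prop)
  (Hdec : independent_decomposition R sigma conj AL BL) :
  forall l : Lam,
    complete_block (is_concept R sigma sw nw) (@cle d L A B)
      (@bot_concept d L A B) (@top_concept d L A B) (Kset R sigma sw nw (AL l)).
Proof. exact: (Kset_complete_block Hadj Hunit HL Hnorm Hdec Hacc). Qed.
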